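(* For each $n=1,2,\dots$ there is a function $f:\{-1,1\}^n\to \{z\in\mathbb{C}:\ |z|=1\}$ with \[ I(f)<1 \qquad\text{and}\qquad H(|\hat f|^2)>\frac{n}{n+1}\log n. \]
   Context: Equip $\{-1,1\}^n$ with the uniform (normalized counting) probability measure. Let $\varepsilon_i:\{-1,1\}^n\to\{-1,1\}$ be the $i$-th coordinate projection, and for $A\subseteq[n]=\{1,\dots,n\}$ let $W_A=\prod_{i\in A}\varepsilon_i$. For $g:\{-1,1\}^n\to\mathbb{C}$, the Fourier–Walsh coefficients are $\hat g(A)=2^{-n}\sum_{\delta\in\{-1,1\}^n} g(\delta)W_A(\delta)$, so $g=\sum_{A\subseteq[n]}\hat g(A)W_A$. The influence is $I(g)=\sum_{A\subseteq[n]}|\hat g(A)|^2|A|$, and the Fourier entropy is $H(|\hat g|^2)=-\sum_{A\subseteq[n]}|\hat g(A)|^2\log|\hat g(A)|^2$ with $0\log 0=0$. Logarithms are to base $2$. *)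

From HB Require Import structures.
From mathcomp Require Import all_boot all_order all_algebra.
From mathcomp Require Import reals exp.
From mathcomp Require Import complex.
Set Implicit Arguments. Unset Strict Implicit. Unset Printing Implicit Defensive.
Import Order.TTheory GRing.Theory Num.Theory.
Local Open Scope ring_scope.

(* The cube {-1,1}^n is encoded as 'I_n -> bool: coordinate i of delta is
   -1 if delta i = true and +1 if delta i = false. *)
Definition cube (n : nat) := {ffun 'I_n -> bool}.

Section Fourier.
Variable R : realType.
Variable n : nat.

Definition eps (i : 'I_n) (d : cube n) : R[i] := if d i then -1 else 1.

Definition walsh (A : {set 'I_n}) (d : cube n) : R[i] := \prod_(i in A) eps i d.

Definition fhat (g : cube n -> R[i]) (A : {set 'I_n}) : R[i] :=
  (2 ^+ n)^-1 * \sum_(d : cube n) g d * walsh A d.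

(* |hat g(A)|^2, as a real number: the modulus `|z| in R[i] is real, we take
   its real part to land in R *)
Definition fsq (g : cube n -> R[i]) (A : {set 'I_n}) : R := complex.Re (`|fhat g A| ^+ 2).

Definition influence (g : cube n -> R[i]) : R :=
  \sum_(A : {set 'I_n}) fsq g A * #|A|%:R.

End Fourier.

Definition log2 (R : realType) (x : R) : R := ln x / ln 2.

Definition fentropy (R : realType) (n : nat) (g : cube n -> R[i]) : R :=
  - \sum_(A : {set 'I_n})
      (if fsq g A == 0 then 0 else fsq g A * log2 (fsq g A)).

(* The witness is f = prod_i (sqrt(1-p) + i sqrt(p) eps_i) with p = 1/(n+1).
   Each factor has modulus 1, and since the factors depend on distinct
   coordinates, fhat f A = prod_(i in A) i sqrt(p) * prod_(i notin A) sqrt(1-p):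
   the spectral weights |fhat f A|^2 form the p-biased product distribution on
   subsets of [n].  So I(f) is its expected size n p = n/(n+1) < 1, and
   H(|fhat f|^2) is n times the binary entropy of p, which exceeds
   n p log(1/p) = n/(n+1) log(n+1) > n/(n+1) log n. *)

From HB Require Import structures.
From mathcomp Require Import all_boot all_order all_algebra.
From mathcomp Require Import reals exp.
From mathcomp Require Import complex.
From mathcomp Require Import ring.
Set Implicit Arguments. Unset Strict Implicit. Unset Printing Implicit Defensive.
Import Order.TTheory GRing.Theory Num.Theory.
Local Open Scope ring_scope.

Lemma sum_set_prod (R : comNzRingType) (I : finType) (w : I -> bool -> R) :
  \sum_(A : {set I}) \prod_i w i (i \in A) = \prod_i (w i true + w i false).
Proof.
rewrite bigA_distr; apply: eq_big => [A|A _]; first by rewrite inE.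
by apply: eq_bigr => i _; case: (i \in A).
Qed.

Section ProductWeights.
Variables (R : comNzRingType) (I : finType) (q : bool -> R).
Hypothesis q_sum1 : q true + q false = 1.

Definition prod_weight (A : {set I}) : R := \prod_i q (i \in A).

Lemma sum_prod_weight_coord (j : I) (h : bool -> R) :
  \sum_(A : {set I}) prod_weight A * h (j \in A) = q true * h true + q false * h false.
Proof.
(* Fold h into the j-th factor: the sum then factorizes, and every other
   factor sums to 1. *)
pose w i b := if i == j then q b * h b else q b.
transitivity (\sum_(A : {set I}) \prod_i w i (i \in A)).
  apply: eq_bigr => A _; rewrite /prod_weight (bigD1 j) // [RHS](bigD1 j) //=.
  rewrite /w eqxx mulrAC; congr (_ * _).
  by apply: eq_bigr => i /negbTE ->.
rewrite sum_set_prod (bigD1 j) //= big1 ?mulr1 => [|i /negbTE ij]; rewrite /w ?eqxx //.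
by rewrite ij q_sum1.
Qed.

Lemma sum_prod_weight_sum_coord (h : bool -> R) :
  \sum_(A : {set I}) prod_weight A * \sum_j h (j \in A)
  = #|I|%:R * (q true * h true + q false * h false).
Proof.
under eq_bigr do rewrite mulr_sumr.
rewrite exchange_big /=.
under eq_bigr do rewrite sum_prod_weight_coord.
by rewrite sumr_const mulr_natl.
Qed.

Lemma sum_prod_weight_card :
  \sum_(A : {set I}) prod_weight A * #|A|%:R = #|I|%:R * q true.
Proof.
have cardE (A : {set I}) : #|A|%:R = \sum_j (if j \in A then 1 else 0) :> R.
  by rewrite -big_mkcond /= sumr_const.
under eq_bigr do rewrite cardE.
rewrite (sum_prod_weight_sum_coord (fun b : bool => if b then 1 else 0)).
by rewrite mulr1 mulr0 addr0.
Qed.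

End ProductWeights.

Section ProductFourier.
Variables (R : realType) (n : nat).

Lemma fhat_prod (h : 'I_n -> bool -> R[i]) (A : {set 'I_n}) :
  fhat (fun d => \prod_i h i (d i)) A
  = \prod_i ((h i false + (if i \in A then -1 else 1) * h i true) / 2).
Proof.
pose w i (b : bool) := h i b * (if i \in A then (if b then -1 else 1) else 1).
have walshE (d : cube n) : \prod_i h i (d i) * walsh R A d = \prod_i w i (d i).
  by rewrite /walsh [\prod_(i in A) _]big_mkcond -big_split.
have inv2n : (2 : R[i]) ^- n = \prod_(i < n) 2^-1.
  by rewrite prodr_const card_ord exprVn.
rewrite /fhat (eq_bigr _ (fun d _ => walshE d)) -(bigA_distr_bigA w) inv2n.
rewrite -big_split; apply: eq_bigr => i _; rewrite big_bool /w /=.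
by case: (i \in A); ring.
Qed.

Lemma fhat_prod_affine (a b : R[i]) (A : {set 'I_n}) :
  fhat (fun d => \prod_i (a + b * eps R i d)) A = \prod_i (if i \in A then b else a).
Proof.
rewrite (fhat_prod (fun _ x => a + b * (if x then -1 else 1))).
apply: eq_bigr => i _.
have two0 : (2 : R[i]) != 0 by rewrite pnatr_eq0.
by case: (i \in A); apply: (canLR (mulfK two0)); ring.
Qed.

End ProductFourier.

Section Log2.
Variable R : realType.

Let ln2_gt0 : 0 < ln (2 : R). Proof. by rewrite ln_gt0 // ltr1n. Qed.

Lemma ltr_log2 : {in Num.pos &, {mono @log2 R : x y / x < y}}.
Proof. by move=> x y x_gt0 y_gt0; rewrite /log2 ltr_pM2r ?invr_gt0 // ltr_ln. Qed.

Lemma log2V (x : R) : 0 < x -> log2 x^-1 = - log2 x.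
Proof. by move=> x_gt0; rewrite /log2 lnV ?posrE // mulNr. Qed.

Lemma log2_lt0 (x : R) : 0 < x < 1 -> log2 x < 0.
Proof. by move=> x01; rewrite /log2 pmulr_llt0 ?invr_gt0 // ln_lt0. Qed.

Lemma log2_prod (I : finType) (F : I -> R) :
  (forall i, 0 < F i) -> log2 (\prod_i F i) = \sum_i log2 (F i).
Proof.
move=> F_gt0; rewrite /log2 -mulr_suml; congr (_ / _).
suff [] : 0 < \prod_i F i /\ ln (\prod_i F i) = \sum_i ln (F i) by [].
apply: (big_rec2 (fun x y => 0 < x /\ ln x = y)) => [|i x _ _ [x_gt0 <-]].
  by rewrite ln1.
by rewrite mulr_gt0 // lnM // posrE.
Qed.

Lemma binary_entropy_gt (p : R) : 0 < p < 1 ->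
  p * log2 p^-1 < - (p * log2 p + (1 - p) * log2 (1 - p)).
Proof.
case/andP=> p_gt0 p_lt1.
have q01 : 0 < 1 - p < 1 by rewrite subr_gt0 p_lt1 ltrBlDr ltrDl p_gt0.
rewrite log2V // mulrN opprD ltrDl oppr_gt0 pmulr_rlt0 ?log2_lt0 //.
by case/andP: q01.
Qed.

End Log2.

Section RieszProduct.
Variables (R : realType) (n : nat) (p : R).
Hypothesis p01 : 0 <= p <= 1.

Definition bernoulli (b : bool) : R := if b then p else 1 - p.

Definition riesz_prod (d : cube n) : R[i] :=
  \prod_i ((Num.sqrt (1 - p))%:C + (Num.sqrt p)*i * eps R i d)%C.

Let p_ge0 : 0 <= p. Proof. by case/andP: p01. Qed.
Let q_ge0 : 0 <= 1 - p. Proof. by case/andP: p01; rewrite subr_ge0. Qed.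

Lemma bernoulli_sum1 : bernoulli true + bernoulli false = 1.
Proof. by rewrite /bernoulli addrC subrK. Qed.

Lemma norm_riesz_prod d : `|riesz_prod d| = 1.
Proof.
rewrite normr_prod big1 // => i _; apply/eqP; rewrite -sqrp_eq1 // -add_Re2_Im2.
by rewrite /eps; case: (d i) => /=; simpc; rewrite ?sqrrN !sqr_sqrtr // subrK.
Qed.

Lemma fsq_riesz_prod A : fsq riesz_prod A = prod_weight bernoulli A.
Proof.
rewrite /fsq fhat_prod_affine normr_prod -prodrXl.
rewrite (eq_bigr (fun i => (bernoulli (i \in A))%:C%C)) => [|i _].
  by rewrite -rmorph_prod.
rewrite -add_Re2_Im2 /bernoulli.
by case: (i \in A) => /=; rewrite expr0n ?add0r ?addr0 sqr_sqrtr.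
Qed.

Lemma influence_riesz_prod : influence riesz_prod = n%:R * p.
Proof.
rewrite /influence; under eq_bigr do rewrite fsq_riesz_prod.
by rewrite sum_prod_weight_card ?bernoulli_sum1 // card_ord.
Qed.

Lemma fentropy_riesz_prod : 0 < p < 1 ->
  fentropy riesz_prod = - (n%:R * (p * log2 p + (1 - p) * log2 (1 - p))).
Proof.
case/andP=> p_gt0 p_lt1.
have bernoulli_gt0 b : 0 < bernoulli b by case: b; rewrite /= ?subr_gt0.
rewrite /fentropy; congr (- _).
transitivity (\sum_(A : {set 'I_n}) prod_weight bernoulli A *
                \sum_j log2 (bernoulli (j \in A))).
  apply: eq_bigr => A _; rewrite fsq_riesz_prod.
  have w_gt0 : 0 < prod_weight bernoulli A by apply: prodr_gt0.
  by rewrite gt_eqF // log2_prod.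
rewrite (sum_prod_weight_sum_coord _ bernoulli_sum1 (@log2 R \o bernoulli)).
by rewrite card_ord.
Qed.

End RieszProduct.

Theorem theorem2 (R : realType) (n : nat) : (0 < n)%N ->
  exists f : cube n -> R[i],
    (forall d : cube n, `|f d| = 1) /\
    influence f < 1 /\
    fentropy f > n%:R / (n.+1)%:R * log2 (n%:R : R).
Proof.
move=> n_gt0; set p : R := n.+1%:R^-1.
have n1_gt0 : (0 : R) < n.+1%:R by rewrite ltr0n.
have p_gt0 : 0 < p by rewrite invr_gt0.
have p01 : 0 < p < 1 by rewrite p_gt0 invf_lt1 // ltr1n ltnS.
have p01w : 0 <= p <= 1 by case/andP: p01 => /ltW -> /ltW ->.
exists (@riesz_prod R n p); split; first exact: norm_riesz_prod.
split; first by rewrite influence_riesz_prod // ltr_pdivrMr // mul1r ltr_nat.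
rewrite fentropy_riesz_prod // -mulrN -[_ / _]/(n%:R * p) -mulrA ltr_pM2l ?ltr0n //.
apply: lt_trans (binary_entropy_gt p01).
by rewrite ltr_pM2l // invrK ltr_log2 ?posrE ?ltr0n // ltr_nat.
Qed.
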